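(* Each of the following holds, where each larger space is regarded as a metric space with the supremum-norm metric: (i) $c$ is strongly lower porous in $\widehat{c}$; (ii) $c_0$ is strongly lower porous in $\widehat{c_0}$; (iii) $\widehat{c}$ is strongly lower porous in $S$; (iv) $\widehat{c_0}$ is strongly lower porous in $S_0$; (v) $S$ is strongly lower porous in $\ell^\infty$.
   Context: $\ell^\infty$ is the space of bounded real sequences with the sup norm; $c$ and $c_0$ are the subspaces of convergent sequences and sequences convergent to $0$. A Banach limit is a linear functional $L\colon\ell^\infty\to\mathbb R$ such that for every $(x_n)\in\ell^\infty$: (1) if $x_n\ge0$ for all $n$ then $L((x_n))\ge0$; (2) $L((x_2,x_3,\dots))=L((x_1,x_2,\dots))$; (3) $L((1,1,\dots))=1$. $\widehat{c}$ is the set of $x\in\ell^\infty$ for which there is $s\in\mathbb R$ with $L(x)=s$ for every Banach limit $L$; $\widehat{c_0}$ is the set of $x\in\ell^\infty$ with $L(x)=0$ for every Banach limit $L$. $S=\{x\in\ell^\infty\colon\lim_n\frac{x_1+\dots+x_n}{n}\text{ exists}\}$, $S_0=\{x\in\ell^\infty\colon\lim_n\frac{x_1+\dots+x_n}{n}=0\}$. In a metric space $(Y,d)$, with $B(x,r)=\{y\colon d(x,y)<r\}$ and, for $E\subset Y$, $\gamma(x,R,E)=\sup\{r>0\colon\exists z\in Y,\ B(z,r)\subset B(x,R)\setminus E\}$, the lower porosity of $E$ at $x$ is $2\liminf_{r\to0^+}\gamma(x,r,E)/r$; $E$ is strongly lower porous in $Y$ if its lower porosity equals $1$ at every point of $E$.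 *)

From HB Require Import structures.
From mathcomp Require Import all_boot all_order all_algebra.
From mathcomp Require Import all_classical all_reals all_analysis.
Set Implicit Arguments. Unset Strict Implicit. Unset Printing Implicit Defensive.
Import Order.TTheory GRing.Theory Num.Theory.
Import numFieldNormedType.Exports.
Local Open Scope classical_set_scope.
Local Open Scope ring_scope.

Section Defs.
Variable R : realType.

Definition linf : set (nat -> R) := [set x | exists M : R, forall n, `|x n| <= M].

(* sup-norm distance, valued in extended reals (finite on l^infty) *)
Definition supdist (x y : nat -> R) : \bar R :=
  ereal_sup [set (`|x n - y n|)%:E | n in [set: nat]].

Definition cseq : set (nat -> R) := [set x | linf x /\ cvgn x].
Definition c0seq : set (nat -> R) := [set x | linf x /\ x @ \oo --> (0 : R)].

(* Banach limits: linear functionals on l^infty (values outside l^infty are irrelevant) *)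
Definition BanachLimit (L : (nat -> R) -> R) : Prop :=
  [/\ (forall x y, linf x -> linf y -> L (fun n => x n + y n) = L x + L y),
      (forall (a : R) x, linf x -> L (fun n => a * x n) = a * L x),
      (forall x, linf x -> (forall n, 0 <= x n) -> 0 <= L x),
      (forall x, linf x -> L (fun n => x n.+1) = L x) &
      L (fun _ => 1) = 1].

Definition chat : set (nat -> R) :=
  [set x | linf x /\ exists s : R, forall L, BanachLimit L -> L x = s].
Definition chat0 : set (nat -> R) :=
  [set x | linf x /\ forall L, BanachLimit L -> L x = 0].

(* Cesaro means: (x_1 + ... + x_n)/n, here with 0-based indexing *)
Definition cesaro (x : nat -> R) (n : nat) : R :=
  (\sum_(i < n.+1) x i) / n.+1%:R.
Definition Sset : set (nat -> R) := [set x | linf x /\ cvgn (cesaro x)].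
Definition S0set : set (nat -> R) := [set x | linf x /\ cesaro x @ \oo --> (0 : R)].

Definition ballY (Y : set (nat -> R)) (x : nat -> R) (r : R) : set (nat -> R) :=
  [set y | Y y /\ (supdist x y < r%:E)%E].

Definition gammaP (Y E : set (nat -> R)) (x : nat -> R) (Rad : R) : \bar R :=
  ereal_sup [set r%:E | r in [set r : R | 0 < r /\
     exists z, Y z /\ ballY Y z r `<=` ballY Y x Rad `\` E]].

Definition liminf0r (f : R -> \bar R) : \bar R :=
  ereal_sup [set ereal_inf [set f r | r in [set r : R | 0 < r < d]]
            | d in [set d : R | 0 < d]].

Definition lower_porosity (Y E : set (nat -> R)) (x : nat -> R) : \bar R :=
  (2%:E * liminf0r (fun r => gammaP Y E x r * (r^-1)%:E))%E.

Definition strongly_lower_porous (Y E : set (nat -> R)) : Prop :=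
  forall x, E x -> lower_porosity Y E x = 1%E.

End Defs.

(* Each of the five pairs E <= Y consists of linear subspaces of l^infty, and Y
   contains a sequence w with |w_n| <= 1 at sup-distance at least 1 from E.  For
   x in E and r > 0 the ball of radius r/2 around x + (r/2) w then lies in B(x, r)
   and misses E, while no ball in B(x, r) \ E has radius above r/2 (push its
   centre away from x).  So gamma(x, r, E) = r/2 and the lower porosity is 1.

   The witnesses are (-1)^n, a Banach-null sequence at distance 1 from c;
   (-1)^floor(sqrt n), Cesaro-null, but whose means over windows inside the even
   (resp. odd) square blocks give Banach limits 1 (resp. -1), so it is at
   distance 1 from c-hat; and (-1)^floor(log2 log2 n), whose Cesaro means
   oscillate between nearly 1 and nearly -1.  Banach limits obtained as
   ultrafilter limits of window means also show that c-hat <= S. *)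

From mathcomp Require Import all_boot all_order all_algebra.
From mathcomp Require Import all_classical all_reals all_analysis.
From mathcomp Require Import ring lra zify.
From Stdlib Require PeanoNat.
Set Implicit Arguments. Unset Strict Implicit. Unset Printing Implicit Defensive.
Import Order.TTheory GRing.Theory Num.Theory.
Import numFieldNormedType.Exports.
Local Open Scope classical_set_scope.
Local Open Scope ring_scope.

Section SupDistance.
Variable R : realType.
Implicit Types (x y : nat -> R) (c r : R).

Lemma supdist_le_bound x y c : (forall n, `|x n - y n| <= c) -> (supdist x y <= c%:E)%E.
Proof. by move=> bnd; apply: ge_ereal_sup => _ [n _ <-]; rewrite lee_fin. Qed.

Lemma supdist_ge x y n : (`|x n - y n|%:E <= supdist x y)%E.
Proof. by apply: ereal_sup_ubound; exists n. Qed.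

Lemma supdist_ltP x y r :
  (supdist x y < r%:E)%E <-> exists2 c, c < r & forall n, `|x n - y n| <= c.
Proof.
split=> [lt_r|[c cr bnd]]; last exact: le_lt_trans (supdist_le_bound bnd) _.
have fin_d : supdist x y \is a fin_num.
  by rewrite ge0_fin_numE ?(lt_trans lt_r) ?ltry // (le_trans _ (supdist_ge x y 0)).
exists (fine (supdist x y)); first by rewrite -lte_fin fineK.
by move=> n; rewrite -lee_fin fineK // supdist_ge.
Qed.

Lemma supdist_fin_num x y : linf x -> linf y -> supdist x y \is a fin_num.
Proof.
move=> [Mx bx] [My bY]; rewrite ge0_fin_numE ?(le_trans _ (supdist_ge x y 0)) //.
apply: le_lt_trans (supdist_le_bound (c := Mx + My) _) (ltry _) => n.
exact: le_trans (ler_normB _ _) (lerD (bx n) (bY n)).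
Qed.

Lemma supdist_geP x y a :
  (a%:E <= supdist x y)%E <-> forall c, (forall n, `|x n - y n| <= c) -> a <= c.
Proof.
split=> [a_le c bnd|a_lb].
  by rewrite -lee_fin (le_trans a_le (supdist_le_bound bnd)).
by rewrite leNgt; apply/negP => /supdist_ltP[c ca /a_lb]; rewrite leNgt ca.
Qed.

End SupDistance.

Section Porosity.
Variable R : realType.
Implicit Types (x y z w : nat -> R) (Y E : set (nat -> R)).

Definition lin_closed (P : set (nat -> R)) :=
  forall u v (a b : R), P u -> P v -> P (fun n => a * u n + b * v n).

(* If [B(z, rho)] misses [x] then [rho <= d(x, z)]; pushing [z] away from [x]
   by any step shorter than [rho] stays in [B(x, r)], so [d(x, z) + rho <= r]. *)
Lemma gammaP_le_half Y E x r : Y `<=` @linf R -> lin_closed Y -> Y x -> E x ->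
  (gammaP Y E x r <= (r / 2)%:E)%E.
Proof.
move=> Ylinf linY Yx Ex.
apply: ge_ereal_sup => _ [rho [rho0 [z [Yz sub]]] <-]; rewrite lee_fin.
pose D := fine (supdist z x).
have dzx : supdist z x = D%:E.
  by rewrite fineK // (supdist_fin_num (Ylinf _ Yz) (Ylinf _ Yx)).
have rhoD : rho <= D.
  rewrite -lee_fin -dzx leNgt; apply/negP => zx.
  by have [_] := sub x (conj Yx zx).
have ray t : 0 <= t -> t * D < rho -> (1 + t) * D < r.
  move=> t0 tD; pose y n := (1 + t) * z n + (- t) * x n.
  have /sub[[_ /supdist_ltP[c cr bnd]] _] : ballY Y z rho y.
    split; first exact: linY.
    apply/supdist_ltP; exists (t * D) => // n.
    rewrite (_ : z n - y n = - (t * (z n - x n))); last by rewrite /y; ring.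
    by rewrite normrN normrM ger0_norm // ler_wpM2l // -lee_fin -dzx supdist_ge.
  have t1 : 0 < 1 + t by lra.
  apply: le_lt_trans cr; rewrite mulrC -ler_pdivlMr // -lee_fin -dzx.
  apply: supdist_le_bound => n; rewrite ler_pdivlMr // -(ger0_norm (ltW t1)) -normrM.
  by rewrite (_ : (z n - x n) * (1 + t) = - (x n - y n)) ?normrN //; rewrite /y; ring.
rewrite leNgt; apply/negP => half_lt.
have D0 : 0 < D := lt_le_trans rho0 rhoD.
have Dr : D < r by have := ray 0 (lexx 0); rewrite mul0r addr0 mul1r; apply.
suff : (1 + (r - D) / D) * D < r.
  by rewrite (_ : (1 + (r - D) / D) * D = r) ?ltxx //; field; rewrite gt_eqF.
apply: ray; first by rewrite divr_ge0 ?subr_ge0 ?ltW.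
by rewrite divfK ?gt_eqF //; lra.
Qed.

(* The ball [B(x + r/2 w, r/2)] lies in [B(x, r)] and misses [E]: a point [y]
   of [E] in it would put [(2/r)(y - x)] in [E] at distance [< 1] from [w]. *)
Lemma gammaP_ge_half Y E w x r : lin_closed Y -> lin_closed E -> E `<=` Y ->
  Y w -> (forall n, `|w n| <= 1) -> (forall e, E e -> (1 <= supdist w e)%E) ->
  E x -> 0 < r -> ((r / 2)%:E <= gammaP Y E x r)%E.
Proof.
move=> linY linE EY Yw w1 farw Ex r0.
have r2 : 0 < r / 2 by rewrite divr_gt0.
apply: ereal_sup_ubound; exists (r / 2) => //; split => //.
pose z n := 1 * x n + r / 2 * w n.
exists z; split; first exact: linY (EY _ Ex) Yw.
move=> y [Yy /supdist_ltP[c cr bnd]]; split.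
  split=> //; apply/supdist_ltP; exists (r / 2 + c); first lra.
  move=> n; rewrite (_ : x n - y n = - (r / 2 * w n) + (z n - y n)); last first.
    by rewrite /z; ring.
  apply: le_trans (ler_normD _ _) (lerD _ (bnd n)).
  by rewrite normrN normrM ger0_norm ?(ltW r2) // -[leRHS]mulr1 ler_wpM2l ?(ltW r2).
move=> Ey; have /supdist_geP far_e := farw _ (linE _ _ (2 / r) (- (2 / r)) Ey Ex).
have : 1 <= 2 / r * c.
  apply: far_e => n.
  rewrite (_ : w n - _ = 2 / r * (z n - y n)); last by rewrite /z; field; rewrite gt_eqF.
  by rewrite normrM ger0_norm ?divr_ge0 ?(ltW r0) // ler_wpM2l ?divr_ge0 ?(ltW r0).
apply/negP; rewrite -ltNge -(ltr_pM2l r2) mulrA mulr1.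
by rewrite (_ : r / 2 * (2 / r) = 1) ?mul1r //; field; rewrite gt_eqF.
Qed.

Lemma strongly_lower_porous_gammaP_half Y E :
  (forall x r, E x -> 0 < r -> gammaP Y E x r = (r / 2)%:E) ->
  strongly_lower_porous Y E.
Proof.
move=> gammaE x Ex; rewrite /lower_porosity /liminf0r.
have inf_half d : 0 < d -> ereal_inf [set (gammaP Y E x r * (r^-1)%:E)%E
    | r in [set r : R | 0 < r < d]] = (2^-1)%:E.
  move=> d0; rewrite (_ : [set _ | _ in _] = [set (2^-1)%:E]) ?ereal_inf1 //.
  apply/seteqP; split => [_ [r /andP[r0 _] <-]|_ ->] /=.
    by rewrite gammaE // -EFinM; congr EFin; field; rewrite gt_eqF.
  exists (d / 2); first by apply/andP; split; lra.
  by rewrite gammaE ?divr_gt0 // -EFinM; congr EFin; field; rewrite gt_eqF.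
rewrite (_ : [set _ | _ in _] = [set (2^-1)%:E]) ?ereal_sup1.
  by rewrite -EFinM divff.
apply/seteqP; split => [_ [d d0 <-]|_ ->] /=; first by rewrite inf_half.
by exists 1 => //; rewrite inf_half.
Qed.

Lemma strongly_lower_porous_subspace Y E w :
  Y `<=` @linf R -> lin_closed Y -> lin_closed E -> E `<=` Y ->
  Y w -> (forall n, `|w n| <= 1) -> (forall e, E e -> (1 <= supdist w e)%E) ->
  strongly_lower_porous Y E.
Proof.
move=> Ylinf linY linE EY Yw w1 farw.
apply: strongly_lower_porous_gammaP_half => x r Ex r0.
apply/eqP; rewrite eq_le (gammaP_le_half r Ylinf linY (EY _ Ex) Ex) /=.
exact: gammaP_ge_half Yw w1 farw Ex r0.
Qed.

End Porosity.

Section LinearCombinations.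
Variable R : realType.
Implicit Types (u v : nat -> R) (a b : R).

Lemma cvg_lincomb T (F : set_system T) {FF : Filter F} (f g : T -> R) a b lf lg :
  f @ F --> lf -> g @ F --> lg -> (fun t => a * f t + b * g t) @ F --> a * lf + b * lg.
Proof. by move=> cvf cvg; apply: cvgD; [exact: cvgMl_tmp|exact: cvgMl_tmp]. Qed.

Lemma cesaro_lincomb u v a b :
  cesaro (fun n => a * u n + b * v n) = (fun n => a * cesaro u n + b * cesaro v n).
Proof. by apply/funext => n; rewrite /cesaro big_split /= -!mulr_sumr; ring. Qed.

Lemma linf_lin : lin_closed (@linf R).
Proof.
move=> u v a b [Mu bu] [Mv bv]; exists (`|a| * Mu + `|b| * Mv) => n.
by apply: le_trans (ler_normD _ _) _; rewrite !normrM lerD // ler_wpM2l.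
Qed.

Lemma linf_scale a u : linf u -> linf (fun n => a * u n).
Proof. by move=> [M bu]; exists (`|a| * M) => n; rewrite normrM ler_wpM2l. Qed.

Lemma linf_cst a : linf (fun=> a).
Proof. by exists `|a|. Qed.

Lemma linf_shiftn u N : linf u -> linf (fun n => u (n + N)%N).
Proof. by move=> [M bu]; exists M. Qed.

Lemma cseq_lin : lin_closed (@cseq R).
Proof.
move=> u v a b [lu cvu] [lv cvv]; split; first exact: linf_lin.
by apply: cvgP; apply: cvg_lincomb; [exact: cvu|exact: cvv].
Qed.

Lemma c0seq_lin : lin_closed (@c0seq R).
Proof.
move=> u v a b [lu cvu] [lv cvv]; split; first exact: linf_lin.
by have := cvg_lincomb (a := a) (b := b) cvu cvv; rewrite !mulr0 addr0; exact.
Qed.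

Lemma Sset_lin : lin_closed (@Sset R).
Proof.
move=> u v a b [lu cvu] [lv cvv]; split; first exact: linf_lin.
by rewrite cesaro_lincomb; apply: cvgP; apply: cvg_lincomb; [exact: cvu|exact: cvv].
Qed.

Lemma S0set_lin : lin_closed (@S0set R).
Proof.
move=> u v a b [lu cvu] [lv cvv]; split; first exact: linf_lin.
rewrite cesaro_lincomb.
by have := cvg_lincomb (a := a) (b := b) cvu cvv; rewrite !mulr0 addr0; exact.
Qed.

End LinearCombinations.

Section BanachLimitTheory.
Variables (R : realType) (L : (nat -> R) -> R).
Hypothesis BL : BanachLimit L.
Implicit Types (u v : nat -> R) (a b c : R).

Lemma banach_limit_lin u v a b : linf u -> linf v ->
  L (fun n => a * u n + b * v n) = a * L u + b * L v.
Proof.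
case: BL => Ladd LZ _ _ _ lu lv.
by rewrite (Ladd (fun n => a * u n) (fun n => b * v n)) ?LZ //; exact: linf_scale.
Qed.

Lemma banach_limit_norm_le u c : linf u -> (forall n, `|u n| <= c) -> `|L u| <= c.
Proof.
case: (BL) => _ _ Lge0 _ L1 lu bnd.
have l1 := linf_cst 1.
have lb : 0 <= L (fun n => -1 * u n + c * 1).
  by apply: Lge0 => [|n]; [exact: linf_lin|have := bnd n; rewrite ler_norml; lra].
have ub : 0 <= L (fun n => 1 * u n + c * 1).
  by apply: Lge0 => [|n]; [exact: linf_lin|have := bnd n; rewrite ler_norml; lra].
by rewrite !banach_limit_lin ?L1 // in lb ub; rewrite ler_norml; lra.
Qed.

Lemma banach_limit_shiftn u N : linf u -> L (fun n => u (n + N)%N) = L u.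
Proof.
case: (BL) => _ _ _ Lshift _ lu; elim: N => [|N IH].
  by congr L; apply/funext => n; rewrite addn0.
rewrite -IH -(Lshift _ (linf_shiftn N lu)); congr L; apply/funext => n.
by rewrite addSnnS.
Qed.

(* Shift invariance lets [L] ignore any finite initial segment. *)
Lemma banach_limit_cvg u l : linf u -> u @ \oo --> l -> L u = l.
Proof.
case: (BL) => _ _ _ _ L1 lu /cvgrPdist_le cvu.
pose v n := 1 * u n + (- l) * 1.
have lv : linf v by apply: linf_lin lu (linf_cst 1).
have -> : L u = L v + l by rewrite banach_limit_lin ?L1 //; first ring; exact: linf_cst.
suff -> : L v = 0 by rewrite add0r.
apply/eqP; rewrite -normr_le0.
apply/ler_addgt0Pr => e e0; rewrite add0r.
have [N _ uN] := cvu e e0.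
rewrite -(banach_limit_shiftn N lv); apply: banach_limit_norm_le (linf_shiftn N lv) _.
by move=> n; rewrite /v mul1r mulr1 -normrN opprB; apply: uN; rewrite /= leq_addl.
Qed.

End BanachLimitTheory.

Section WindowMeans.
Variable R : realType.
Implicit Types (b : nat -> nat) (u v y : nat -> R).

Definition window_mean b y (k : nat) : R := (\sum_(i < k.+1) y (b k + i)%N) / k.+1%:R.

Lemma cesaro_window_mean0 y : cesaro y = window_mean (fun=> 0%N) y.
Proof. by apply/funext => k; rewrite /window_mean; under eq_bigr do rewrite add0n. Qed.

Lemma window_mean_lincomb b u v (a c : R) :
  window_mean b (fun n => a * u n + c * v n) =
  (fun k => a * window_mean b u k + c * window_mean b v k).
Proof. by apply/funext => k; rewrite /window_mean big_split /= -!mulr_sumr; ring. Qed.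

Lemma window_mean_norm_le b y M : (forall n, `|y n| <= M) ->
  forall k, `|window_mean b y k| <= M.
Proof.
move=> bnd k; rewrite /window_mean normrM normfV (ger0_norm (ler0n _ _)) ler_pdivrMr //.
apply: le_trans (ler_norm_sum _ _ _) _.
apply: le_trans (ler_sum _ (fun i _ => bnd _)) _.
by rewrite sumr_const card_ord mulr_natr.
Qed.

Lemma window_mean_cst b y (c : R) : (forall k i, (i <= k)%N -> y (b k + i)%N = c) ->
  window_mean b y = fun=> c.
Proof.
move=> yc; apply/funext => k; rewrite /window_mean.
rewrite (eq_bigr (fun=> c)); last by move=> i _; apply: yc; rewrite -ltnS.
by rewrite sumr_const card_ord -[c *+ _]mulr_natr mulfK // pnatr_eq0.
Qed.

Lemma window_mean_shift b y k : window_mean b (fun n => y n.+1) k =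
  window_mean b y k + (y (b k + k.+1)%N - y (b k)) / k.+1%:R.
Proof.
rewrite /window_mean -mulrDl; congr (_ / _).
rewrite big_ord_recr /= [in RHS]big_ord_recl /= addn0.
under eq_bigr do rewrite -addnS.
under [in RHS]eq_bigr do rewrite /bump /= add1n.
by rewrite -addnS; ring.
Qed.

Lemma cvg_bounded_div_succ (f : nat -> R) M : (forall k, `|f k| <= M) ->
  (fun k => f k / k.+1%:R) @ \oo --> 0.
Proof.
move=> bnd; have cvM : (fun k => M * harmonic k) @ \oo --> 0.
  by rewrite -(mulr0 M); apply: cvgMl_tmp; exact: cvg_harmonic.
apply: (squeeze_cvgr _ _ cvM); last by rewrite -oppr0; exact: cvgN cvM.
apply: nearW => k; rewrite -ler_norml normrM normfV (ger0_norm (ler0n _ _)) /=.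
by rewrite ler_wpM2r ?invr_ge0.
Qed.

End WindowMeans.

Section UltrafilterBanachLimits.
Variable R : realType.

Lemma ultra_bounded_cvg T (U : set_system T) (UU : UltraFilter U) (f : T -> R) M :
  (forall t, `|f t| <= M) -> cvg (f @ U).
Proof.
move=> bnd; have fU : (f @ U) `[-M, M]%classic.
  suff : U (f @^-1` `[-M, M]%classic) by [].
  by apply: filterE => t; rewrite /= in_itv /= -ler_norml.
have [p [_ clp]] := @segment_compact R (- M) M (f @ U) _ fU.
apply: (cvgP p) => B Bp; have [//|UnB] := in_ultra_setVsetC (f @^-1` B) UU.
by have [t []] := clp (~` B) B UnB Bp.
Qed.

Lemma ultra_cofinite_ex (A : set nat) : (forall N, exists2 n, (N <= n)%N & A n) ->
  exists U : set_system nat, [/\ UltraFilter U, \oo `<=` U & U A].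
Proof.
move=> Ainf; have PF : ProperFilter (within A \oo).
  apply: Build_ProperFilter_ex => P [N _ NP].
  by have [n Nn An] := Ainf N; exists n; exact: NP.
have [U [UU sU]] := ultraFilterLemma PF; exists U; split => //.
  by move=> P oP; apply: sU; apply: filterS oP => n Pn _.
by apply: sU; apply: nearW.
Qed.

Section WindowBanachLimit.
Variables (U : set_system nat) (b : nat -> nat).
Hypotheses (UU : UltraFilter U) (cofinU : \oo `<=` U).

Definition window_limit (y : nat -> R) : R := lim (window_mean b y @ U).

Let window_mean_ultra_cvg (y : nat -> R) : linf y -> cvg (window_mean b y @ U).
Proof. by move=> [M bnd]; apply: (ultra_bounded_cvg UU); exact: window_mean_norm_le. Qed.

Let window_limit_lincomb u v (a c : R) : linf u -> linf v ->
  window_limit (fun n => a * u n + c * v n) = a * window_limit u + c * window_limit v.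
Proof.
move=> lu lv; rewrite /window_limit window_mean_lincomb.
by apply: cvg_lim => //; apply: cvg_lincomb; exact: window_mean_ultra_cvg.
Qed.

(* Shifting [y] moves the [k]-th window mean by [O(1/k)], which vanishes along
   any ultrafilter finer than the cofinite filter. *)
Lemma window_banach_limit : BanachLimit window_limit.
Proof.
split.
- move=> u v lu lv; have := window_limit_lincomb 1 1 lu lv.
  by under eq_fun do rewrite !mul1r; rewrite !mul1r.
- move=> a u lu; have := window_limit_lincomb a 0 lu lu.
  by under eq_fun do rewrite mul0r addr0; rewrite mul0r addr0.
- move=> y ly y0; apply: limr_ge; first exact: window_mean_ultra_cvg.
  by apply: nearW => k; rewrite /window_mean divr_ge0 // sumr_ge0.
- move=> y [M bnd]; have ly : linf y by exists M.
  have bnd2 k : `|y (b k + k.+1)%N - y (b k)| <= M + M.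
    exact: le_trans (ler_normB _ _) (lerD (bnd _) (bnd _)).
  have cv0 : (fun k => (y (b k + k.+1)%N - y (b k)) / k.+1%:R) @ U --> 0.
    by move=> A /(cvg_bounded_div_succ bnd2); exact: cofinU.
  rewrite /window_limit; have -> : window_mean b (fun n => y n.+1) = window_mean b y \+
      (fun k => (y (b k + k.+1)%N - y (b k)) / k.+1%:R).
    by apply/funext => k; rewrite window_mean_shift.
  by rewrite limD ?(cvg_lim _ cv0) ?addr0 //; exact: window_mean_ultra_cvg.
- rewrite /window_limit (window_mean_cst (c := 1)) ?lim_cst //.
Qed.

End WindowBanachLimit.
End UltrafilterBanachLimits.

Section SummabilitySpaces.
Variable R : realType.

Lemma chat_lin : lin_closed (@chat R).
Proof.
move=> u v a b [lu [su Lu]] [lv [sv Lv]]; split; first exact: linf_lin.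
by exists (a * su + b * sv) => L BL; rewrite banach_limit_lin // Lu // Lv.
Qed.

Lemma chat0_lin : lin_closed (@chat0 R).
Proof.
move=> u v a b [lu Lu] [lv Lv]; split; first exact: linf_lin.
by move=> L BL; rewrite banach_limit_lin // Lu // Lv // !mulr0 addr0.
Qed.

Lemma c0seq_cseq : @c0seq R `<=` @cseq R.
Proof. by move=> u [lu cvu]; split => //; exact: cvgP cvu. Qed.

Lemma chat0_chat : @chat0 R `<=` @chat R.
Proof. by move=> u [lu Lu]; split => //; exists 0. Qed.

Lemma S0set_Sset : @S0set R `<=` @Sset R.
Proof. by move=> u [lu cvu]; split => //; exact: cvgP cvu. Qed.

Lemma cseq_chat : @cseq R `<=` @chat R.
Proof.
by move=> u [lu cvu]; split => //; exists (limn u) => L BL; exact: banach_limit_cvg.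
Qed.

Lemma c0seq_chat0 : @c0seq R `<=` @chat0 R.
Proof. by move=> u [lu cvu]; split => // L BL; exact: banach_limit_cvg. Qed.

(* If the Cesaro means stayed away from [s] along an infinite set of indices,
   an ultrafilter concentrated there would give a Banach limit different from [s]. *)
Lemma banach_limits_cesaro_cvg x (s : R) : linf x ->
  (forall L, BanachLimit L -> L x = s) -> cesaro x @ \oo --> s.
Proof.
move=> [M bnd] Lx; apply/cvgrPdist_lt => e e0; apply: contrapT => not_near.
have [U [UU cofinU Ufar]] : exists U : set_system nat,
    [/\ UltraFilter U, \oo `<=` U & U [set n | ~ `|s - cesaro x n| < e]].
  apply: ultra_cofinite_ex => N; apply: contrapT => no_far.
  apply: not_near; exists N => // n /= Nn; apply: contrapT => far.
  exact: no_far (ex_intro2 _ _ n Nn far).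
have cvU : cesaro x @ U --> s.
  rewrite -(Lx _ (@window_banach_limit R U (fun=> 0%N) UU cofinU)) cesaro_window_mean0.
  exact: (ultra_bounded_cvg UU (window_mean_norm_le _ bnd)).
move/cvgrPdist_lt/(_ e e0): cvU => U_near.
have [n [/= near_n far_n]] := filter_ex (filterI U_near Ufar).
exact: far_n near_n.
Qed.

Lemma chat_Sset : @chat R `<=` @Sset R.
Proof.
by move=> x [lx [s Lx]]; split => //; exact: cvgP (banach_limits_cesaro_cvg lx Lx).
Qed.

Lemma chat0_S0set : @chat0 R `<=` @S0set R.
Proof. by move=> x [lx Lx]; split => //; exact: banach_limits_cesaro_cvg. Qed.

End SummabilitySpaces.

Section AlternatingSequence.
Variable R : realType.

Definition alt (n : nat) : R := (-1) ^+ n.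

Lemma alt_linf : linf alt.
Proof. by exists 1 => n; rewrite normr_sign. Qed.

Lemma alt_chat0 : chat0 alt.
Proof.
split=> [|L BL]; first exact: alt_linf.
case: (BL) => _ LZ _ Lshift _; have := Lshift _ alt_linf.
rewrite (_ : (fun n => alt n.+1) = (fun n => -1 * alt n)); last first.
  by apply/funext => n; rewrite /alt exprS.
by rewrite LZ; [move=> ?; lra|exact: alt_linf].
Qed.

Lemma alt_far_cseq e : cseq e -> (1 <= supdist alt e)%E.
Proof.
move=> [_ /cvgrPdist_le cve]; apply/supdist_geP => c bnd.
apply/ler_addgt0Pr => eps eps0; have [N _ eN] := cve eps eps0.
have alt_l n : (N <= n)%N -> `|alt n - limn e| <= c + eps.
  move=> Nn; rewrite (_ : alt n - _ = (alt n - e n) - (limn e - e n)); last by ring.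
  exact: le_trans (ler_normB _ _) (lerD (bnd n) (eN n Nn)).
have even_N : alt N.*2 = 1 by rewrite /alt -mul2n exprM sqrrN !expr1n.
have N2 : (N <= N.*2)%N by rewrite -addnn leq_addr.
have := alt_l _ (leqW N2); have := alt_l _ N2.
by rewrite {2}/alt exprS -/(alt _) even_N mulr1 !ler_norml => /andP[? ?] /andP[? ?]; lra.
Qed.

End AlternatingSequence.

Section SquareBlockSigns.
Variable R : realType.

Lemma sqrtn_eq s n : (s * s <= n < s.+1 * s.+1)%N -> Nat.sqrt n = s.
Proof. by move=> /andP[lo hi]; apply: PeanoNat.Nat.sqrt_unique; lia. Qed.

Lemma sqrtn_bounds n :
  (Nat.sqrt n * Nat.sqrt n <= n < (Nat.sqrt n).+1 * (Nat.sqrt n).+1)%N.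
Proof. by have [] := PeanoNat.Nat.sqrt_spec' n; lia. Qed.

Lemma sqrtn_cvgn : Nat.sqrt n @[n --> \oo] --> \oo.
Proof.
apply/cvgnyPge => s; exists (s * s)%N => // n /= ssn.
by apply/ssrnat.leP/PeanoNat.Nat.sqrt_le_square; lia.
Qed.

Definition sqrt_sign (n : nat) : R := (-1) ^+ Nat.sqrt n.

Lemma sqrt_sign_linf : linf sqrt_sign.
Proof. by exists 1 => n; rewrite normr_sign. Qed.

Lemma sum_sqrt_sign_square s : \sum_(0 <= i < s * s) sqrt_sign i = (-1) ^+ s.+1 * s%:R.
Proof.
elim: s => [|s IH]; first by rewrite big_geq // mulr0.
rewrite (big_cat_nat _ (n := s * s)) //=; last lia.
rewrite IH (eq_big_nat _ _ (F2 := fun=> (-1) ^+ s)); last first.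
  by move=> i si; rewrite /sqrt_sign (sqrtn_eq si).
rewrite sumr_const_nat (_ : (s.+1 * s.+1 - s * s = 2 * s + 1)%N); last lia.
by rewrite -[(-1) ^+ s *+ _]mulr_natr natrD natrM !exprS -natr1; ring.
Qed.

Lemma sum_sqrt_sign_le n :
  `|\sum_(i < n.+1) sqrt_sign i| <= 3 * (Nat.sqrt n)%:R + 1.
Proof.
set s := Nat.sqrt n; have /andP[ssn nss] := sqrtn_bounds n.
rewrite -(big_mkord xpredT) (big_cat_nat _ (n := s * s)) //=; last lia.
apply: le_trans (ler_normD _ _) _.
rewrite sum_sqrt_sign_square normrM normr_sign mul1r normr_nat.
have tail : `|\sum_(s * s <= i < n.+1) sqrt_sign i| <= (2 * s + 1)%N%:R.
  apply: le_trans (ler_norm_sum _ _ _) _.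
  under eq_bigr do rewrite normr_sign.
  by rewrite sumr_const_nat ler_nat; lia.
by move: tail; rewrite natrD natrM; lra.
Qed.

Lemma sqrt_sign_S0set : S0set sqrt_sign.
Proof.
split; first exact: sqrt_sign_linf.
have cv5 : (fun n => 5 * harmonic (Nat.sqrt n)) @ \oo --> (0 : R).
  rewrite -(mulr0 5); apply: cvgMl_tmp; exact: cvg_comp sqrtn_cvgn cvg_harmonic.
apply: (squeeze_cvgr _ _ cv5); last by rewrite -oppr0; exact: cvgN cv5.
apply: nearW => n; rewrite -ler_norml /cesaro normrM normfV normr_nat /=.
set s := Nat.sqrt n; have /andP[ssn _] := sqrtn_bounds n.
have ss1 : (s * s)%:R + 1 <= n.+1%:R :> R by rewrite -natr1 lerD2r ler_nat.
rewrite ler_pdivrMr // mulrAC ler_pdivlMr // natrM in ss1 *.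
apply: le_trans (ler_wpM2r _ (sum_sqrt_sign_le n)) _ => //.
have s0 : 0 <= s%:R :> R by [].
nra.
Qed.

Lemma window_mean_sqrt_sign m :
  window_mean (fun k => (k.*2 + m) * (k.*2 + m))%N sqrt_sign = fun=> (-1) ^+ m.
Proof.
apply: window_mean_cst => k i ik; rewrite /sqrt_sign (@sqrtn_eq (k.*2 + m)); last lia.
by rewrite exprD -mul2n exprM sqrrN !expr1n mul1r.
Qed.

(* Windows inside even blocks and inside odd blocks give two Banach limits
   taking the values [1] and [-1] at [sqrt_sign]. *)
Lemma sqrt_sign_far_chat e : chat e -> (1 <= supdist sqrt_sign e)%E.
Proof.
move=> [le [s Le]]; apply/supdist_geP => c bnd.
have [U [UU cofinU _]] := @ultra_cofinite_ex setT (fun N => ex_intro2 _ _ N (leqnn N) I).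
have near_s m : `|(-1) ^+ m - s| <= c.
  pose b k := ((k.*2 + m) * (k.*2 + m))%N.
  have BL := @window_banach_limit R U b UU cofinU.
  have Lsign : window_limit U b sqrt_sign = (-1) ^+ m.
    by rewrite /window_limit window_mean_sqrt_sign lim_cst.
  have : `|1 * window_limit U b sqrt_sign + -1 * window_limit U b e| <= c.
    rewrite -(banach_limit_lin BL _ _ sqrt_sign_linf le).
    apply: (banach_limit_norm_le BL) => [|n]; first exact: linf_lin sqrt_sign_linf le.
    by rewrite mul1r mulN1r.
  by rewrite Lsign (Le _ BL) mul1r mulN1r.
by have := near_s 0%N; have := near_s 1%N; rewrite expr0 expr1 !ler_norml; lra.
Qed.

End SquareBlockSigns.

Section TowerBlockSigns.
Variable R : realType.

Definition tower (k : nat) : nat := 2 ^ 2 ^ k.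

Lemma tower_sq k : tower k.+1 = (tower k * tower k)%N.
Proof. by rewrite /tower expnS mulnC expnM expnS expn1. Qed.

Lemma tower_gt k : (k < tower k)%N.
Proof. by rewrite /tower (ltn_trans (ltn_expl k (ltnSn 1))) // ltn_exp2l // ltn_expl. Qed.

Lemma trunc_log2_tower k n : (tower k <= n < tower k.+1)%N ->
  trunc_log 2 (trunc_log 2 n) = k.
Proof.
move=> /andP[lo hi]; have n0 : (0 < n)%N by apply: leq_trans lo; rewrite expn_gt0.
apply: trunc_log_eq => //; rewrite trunc_log_max //=.
by rewrite -(ltn_exp2l _ _ (ltnSn 1)) (leq_ltn_trans (trunc_logP (ltnSn 1) n0)).
Qed.

Definition tower_sign (n : nat) : R := (-1) ^+ trunc_log 2 (trunc_log 2 n).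

Lemma tower_sign_linf : linf tower_sign.
Proof. by exists 1 => n; rewrite normr_sign. Qed.

(* The last block [tower k <= i < tower k.+1], of sign [(-1) ^+ k], dominates the sum. *)
Lemma sum_tower_sign k : (tower k.+1)%:R - 2 * (tower k)%:R <=
  (-1) ^+ k * \sum_(i < tower k.+1) tower_sign i :> R.
Proof.
have le_T : (tower k <= tower k.+1)%N by rewrite tower_sq leq_pmulr // expn_gt0.
rewrite -(big_mkord xpredT) (big_cat_nat _ le_T) //= mulrDr.
rewrite [\sum_(tower k <= i < _) _](eq_big_nat _ _ (F2 := fun=> (-1) ^+ k)); last first.
  by move=> i ki; rewrite /tower_sign (trunc_log2_tower ki).
rewrite sumr_const_nat -[(-1) ^+ k *+ _]mulr_natr mulrA -expr2 sqrr_sign mul1r natrB //.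
have : `|(-1) ^+ k * \sum_(0 <= i < tower k) tower_sign i| <= (tower k)%:R.
  rewrite normrM normr_sign mul1r; apply: le_trans (ler_norm_sum _ _ _) _.
  by under eq_bigr do rewrite normr_sign; rewrite sumr_const_nat subn0.
by rewrite ler_norml => /andP[lo _]; lra.
Qed.

Lemma cesaro_tower_sign k :
  1 - 2 / (tower k)%:R <= (-1) ^+ k * cesaro tower_sign (tower k.+1).-1.
Proof.
have T0 : 0 < (tower k)%:R :> R by rewrite ltr0n (leq_ltn_trans _ (tower_gt k)).
rewrite /cesaro prednK ?(leq_ltn_trans _ (tower_gt _)) // mulrA ler_pdivlMr; last first.
  by rewrite ltr0n (leq_ltn_trans _ (tower_gt _)).
apply: le_trans (sum_tower_sign k); rewrite tower_sq natrM.
by rewrite mulrBl mul1r mulrA divfK ?gt_eqF.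
Qed.

(* For even [k] the Cesaro means of [tower_sign] are close to [1] at
   [(tower k.+1).-1] and close to [-1] at [(tower k.+2).-1]. *)
Lemma tower_sign_far_Sset e : Sset e -> (1 <= supdist tower_sign e)%E.
Proof.
move=> [_ /cvgrPdist_le cve]; apply/supdist_geP => c bnd.
have ces_bnd n : `|cesaro tower_sign n - cesaro e n| <= c.
  have -> : cesaro tower_sign n - cesaro e n = cesaro (fun i => tower_sign i - e i) n.
    by rewrite /cesaro -mulrBl -sumrB.
  by rewrite cesaro_window_mean0; exact: window_mean_norm_le.
apply/ler_addgt0Pr => eps eps0; have eps4 : 0 < eps / 4 by rewrite divr_gt0.
have [N _ eN] := cve _ eps4.
have [K _ hK] := (cvgrPdist_le _ _).1 (@cvg_harmonic R) _ eps4.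
have small_T j : (K <= j)%N -> 2 / (tower j)%:R <= eps / 2.
  move=> Kj; have /hK : (K <= (tower j).-1)%N by have := tower_gt j; lia.
  rewrite /= prednK ?(leq_ltn_trans _ (tower_gt j)) // sub0r normrN normfV normr_nat.
  lra.
pose k := (K + N).*2.
have k_even : (-1) ^+ k = 1 :> R by rewrite /k -mul2n exprM sqrrN !expr1n.
have Kk : (K <= k)%N by rewrite /k; lia.
have Nm1 : (N <= (tower k.+1).-1)%N by have := tower_gt k.+1; rewrite /k; lia.
have Nm2 : (N <= (tower k.+2).-1)%N by have := tower_gt k.+2; rewrite /k; lia.
have := cesaro_tower_sign k; have := cesaro_tower_sign k.+1.
rewrite exprS k_even mulr1 !mulN1r mul1r.
have := ces_bnd (tower k.+1).-1; have := ces_bnd (tower k.+2).-1.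
have := eN _ Nm1; have := eN _ Nm2; have := small_T _ Kk; have := small_T _ (leqW Kk).
rewrite !ler_norml => ? ? /andP[? ?] /andP[? ?] /andP[? ?] /andP[? ?] ? ?; lra.
Qed.

End TowerBlockSigns.

Theorem theorem2p6 (R : realType) :
  [/\ strongly_lower_porous (@chat R) (@cseq R),
      strongly_lower_porous (@chat0 R) (@c0seq R),
      strongly_lower_porous (@Sset R) (@chat R),
      strongly_lower_porous (@S0set R) (@chat0 R) &
      strongly_lower_porous (@linf R) (@Sset R)].
Proof.
have sign_le1 (f : nat -> nat) n : `|(-1) ^+ f n| <= 1 :> R by rewrite normr_sign.
have linf_sub P : [set x | linf x /\ P x] `<=` @linf R by move=> x [].
split.
- apply: (strongly_lower_porous_subspace (linf_sub _) (@chat_lin R) (@cseq_lin R))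
    (@cseq_chat R) (chat0_chat (alt_chat0 R)) (sign_le1 _) (@alt_far_cseq R).
- apply: (strongly_lower_porous_subspace (linf_sub _) (@chat0_lin R) (@c0seq_lin R))
    (@c0seq_chat0 R) (alt_chat0 R) (sign_le1 _) _.
  by move=> e /c0seq_cseq; exact: alt_far_cseq.
- apply: (strongly_lower_porous_subspace (linf_sub _) (@Sset_lin R) (@chat_lin R))
    (@chat_Sset R) (S0set_Sset (sqrt_sign_S0set R)) (sign_le1 _) (@sqrt_sign_far_chat R).
- apply: (strongly_lower_porous_subspace (linf_sub _) (@S0set_lin R) (@chat0_lin R))
    (@chat0_S0set R) (sqrt_sign_S0set R) (sign_le1 _) _.
  by move=> e /chat0_chat; exact: sqrt_sign_far_chat.
- apply: (strongly_lower_porous_subspace (@subset_refl _ _) (@linf_lin R) (@Sset_lin R))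
    (linf_sub _) (tower_sign_linf R) (sign_le1 _) (@tower_sign_far_Sset R).
Qed.
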